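(* Let $B\colon\mathbf{Set}\to\mathbf{Set}$ be a functor, $\Lambda$ a finite set, and $(\tau_\lambda\colon B[0,1]\to[0,1])_{\lambda\in\Lambda}$ functions such that, for every set $Y$, whenever $k_i\colon Y\to[0,1]$ converges uniformly to $l$, $\tau_\lambda\circ Bk_i$ converges uniformly to $\tau_\lambda\circ Bl$ for each $\lambda$. Let $x\colon X\to BX$ be a coalgebra. Then for each $i\in\mathbb{N}$, the set $S_i=\{[\![\varphi]\!]_x\mid\mathrm{depth}(\varphi)\le i\}\subseteq\mathbf{Set}(X,[0,1])$ is approximating, i.e. for every nonexpansive $h\colon(X,d_{S_i})\to([0,1],d_e)$, every $\lambda\in\Lambda$ and all $z,w\in BX$, $\sup_{k\in S_i,\lambda'\in\Lambda}|\tau_{\lambda'}(Bk(z))-\tau_{\lambda'}(Bk(w))|\ge|\tau_\lambda(Bh(z))-\tau_\lambda(Bh(w))|$, where $d_{S_i}(a,b)=\sup_{k\in S_i}|k(a)-k(b)|$.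
   Context: Formulas: $\varphi::=\top\mid\neg\varphi\mid\min(\varphi_1,\varphi_2)\mid(\ominus q)\varphi\ (q\in\mathbb{Q}\cap[0,1])\mid\heartsuit_\lambda\varphi$. Semantics in $[0,1]$: $[\![\top]\!]=1$, $[\![\neg\varphi]\!]=1-[\![\varphi]\!]$, $[\![\min(\varphi_1,\varphi_2)]\!]=\min$ pointwise, $[\![(\ominus q)\varphi]\!]=\max([\![\varphi]\!]-q,0)$, $[\![\heartsuit_\lambda\varphi]\!]_x=\tau_\lambda\circ B[\![\varphi]\!]_x\circ x$. Depth: $0$ for $\top$, unchanged by $\neg,(\ominus q)$, maximum for $\min$, plus one for $\heartsuit_\lambda$. $d_e$ is the Euclidean metric. *)

From HB Require Import structures.
From mathcomp Require Import all_boot all_order all_algebra.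
From mathcomp Require Import boolp classical_sets reals.
Set Implicit Arguments. Unset Strict Implicit. Unset Printing Implicit Defensive.
Import Order.TTheory GRing.Theory Num.Theory.
Local Open Scope ring_scope.
Local Open Scope classical_set_scope.

Record functor := Functor {
  Fobj :> Type -> Type;
  Fmap : forall A C : Type, (A -> C) -> Fobj A -> Fobj C;
  Fmap_id : forall A (u : Fobj A), Fmap (fun a : A => a) u = u;
  Fmap_comp : forall A C D (f : A -> C) (g : C -> D) (u : Fobj A),
      Fmap (fun a => g (f a)) u = Fmap g (Fmap f u) }.
Arguments Fmap {_ _ _}.

Section UnitInterval.
Variable R : realType.

Definition I01 := {x : R | (0 <= x <= 1)}.
Definition v01 (x : I01) : R := proj1_sig x.

Lemma one01 : (0 <= (1:R) <= 1). Proof. by rewrite ler01 lexx. Qed.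
Definition top01 : I01 := exist (fun r : R => (0 <= r <= 1)) 1 one01.

Lemma compl01_subproof (x : I01) : (0 <= 1 - v01 x <= 1).
Proof.
case: x => y /= /andP[h0 h1]; apply/andP; split.
  by rewrite subr_ge0.
by rewrite lerBlDr lerDl.
Qed.
Definition compl01 (x : I01) : I01 := exist (fun r : R => (0 <= r <= 1)) (1 - v01 x) (compl01_subproof x).

Lemma min01_subproof (x y : I01) : (0 <= Num.min (v01 x) (v01 y) <= 1).
Proof.
case: x y => [a /andP[a0 a1]] [b /andP[b0 b1]] /=.
by rewrite le_min a0 b0 /= ge_min a1.
Qed.
Definition min01 (x y : I01) : I01 := exist (fun r : R => (0 <= r <= 1)) _ (min01_subproof x y).

Definition Q01 := {q : rat | (0 <= q <= 1)}.

Lemma trunc01_subproof (q : Q01) (x : I01) :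
  (0 <= Num.max (v01 x - ratr (proj1_sig q)) 0 <= 1).
Proof.
case: q x => [q /andP[q0 q1]] [a /andP[a0 a1]] /=.
rewrite le_max lexx orbT /= ge_max ler01 andbT.
rewrite lerBlDr (le_trans a1) // lerDl.
by rewrite ler0q.
Qed.
Definition trunc01 (q : Q01) (x : I01) : I01 := exist (fun r : R => (0 <= r <= 1)) _ (trunc01_subproof q x).

End UnitInterval.

Inductive formula (Lambda : Type) : Type :=
| FTop : formula Lambda
| FNeg : formula Lambda -> formula Lambda
| FMin : formula Lambda -> formula Lambda -> formula Lambda
| FMinus : Q01 -> formula Lambda -> formula Lambda
| FHeart : Lambda -> formula Lambda -> formula Lambda.
Arguments FTop {Lambda}.

Fixpoint depth Lambda (phi : formula Lambda) : nat :=
  match phi with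
  | FTop => 0
  | FNeg p => depth p
  | FMin p q => maxn (depth p) (depth q)
  | FMinus _ p => depth p
  | FHeart _ p => (depth p).+1
  end.

Fixpoint sem (R : realType) (B : functor) (Lambda : Type)
    (tau : Lambda -> B (I01 R) -> I01 R) (X : Type) (x : X -> B X)
    (phi : formula Lambda) : X -> I01 R :=
  match phi with
  | FTop => fun _ => top01 R
  | FNeg p => fun a => compl01 (sem tau x p a)
  | FMin p q => fun a => min01 (sem tau x p a) (sem tau x q a)
  | FMinus r p => fun a => trunc01 r (sem tau x p a)
  | FHeart l p => fun a => tau l (Fmap (sem tau x p) (x a))
  end.

Definition unif_cvg (R : realType) (Y : Type) (f : nat -> Y -> R) (g : Y -> R) :=
  forall e : R, 0 < e -> exists N : nat, forall n, (N <= n)%N ->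
    forall y, `|f n y - g y| < e.

Definition tau_unif_continuous (R : realType) (B : functor) (Lambda : Type)
    (tau : Lambda -> B (I01 R) -> I01 R) :=
  forall (Y : Type) (k : nat -> Y -> I01 R) (l : Y -> I01 R),
    unif_cvg (fun n y => v01 (k n y)) (fun y => v01 (l y)) ->
    forall lam : Lambda,
      unif_cvg (fun n u => v01 (tau lam (Fmap (k n) u)))
               (fun u => v01 (tau lam (Fmap l u))).

Definition dS (R : realType) (X : Type) (S : set (X -> I01 R)) (a b : X) : R :=
  sup [set `|v01 (k a) - v01 (k b)| | k in S].

Definition nonexpansive (R : realType) (X : Type) (S : set (X -> I01 R))
    (h : X -> I01 R) :=
  forall a b : X, `|v01 (h a) - v01 (h b)| <= dS S a b.

Definition approximating (R : realType) (B : functor) (Lambda : Type)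
    (tau : Lambda -> B (I01 R) -> I01 R) (X : Type) (S : set (X -> I01 R)) :=
  forall h : X -> I01 R, nonexpansive S h ->
  forall (lam : Lambda) (z w : B X),
    `|v01 (tau lam (Fmap h z)) - v01 (tau lam (Fmap h w))|
    <= sup [set `|v01 (tau p.2 (Fmap p.1 z)) - v01 (tau p.2 (Fmap p.1 w))|
           | p in [set p : (X -> I01 R) * Lambda | S p.1]].

Definition S_depth (R : realType) (B : functor) (Lambda : Type)
    (tau : Lambda -> B (I01 R) -> I01 R) (X : Type) (x : X -> B X) (i : nat)
    : set (X -> I01 R) :=
  [set f | exists phi : formula Lambda, (depth phi <= i)%N /\ f = sem tau x phi].

(* For every e > 0 the pseudometric d_{S_i} is, up to e, the maximum
   of |k a - k b| over a finite family of formulas of depth <= i.  This goes by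
   induction on i: a formula of depth i+1 is a propositional combination of
   modal formulas heart_lam psi with depth psi <= i, the connectives do not
   increase |phi a - phi b|, the formulas psi have a finite uniform net of formulas
   of depth <= i, and uniform continuity of k |-> tau_lam o Bk (which follows
   from the sequential hypothesis; Lambda finite gives a common modulus)
   transfers closeness from psi to heart_lam psi.  A function h nonexpansive for
   such a finite maximum is uniformly approximated by a minimum of truncated
   cones c_p + max_t |k_t - p_t| over the points p of a finite grid, which is
   the semantics of a formula of depth <= i; this also yields the net.  Hence
   tau_lam o Bh is uniformly close to tau_lam o Bk for some k in S_i. *)

From HB Require Import structures.
From mathcomp Require Import all_boot all_order all_algebra.
From mathcomp Require Import boolp classical_sets reals.
From mathcomp Require Import lra.
Set Implicit Arguments. Unset Strict Implicit. Unset Printing Implicit Defensive.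
Import Order.TTheory GRing.Theory Num.Theory.
Local Open Scope ring_scope.

Section MinMaxDistances.
Variable R : realDomainType.
Implicit Types a b c d q u v : R.

Lemma oneB_minB u v : 1 - Num.min (1 - u) (1 - v) = Num.max u v.
Proof. by rewrite oppr_min addr_maxr !subKr. Qed.

Lemma oneB_max_oneB u q : 1 - Num.max (1 - u - q) 0 = Num.min (u + q) 1.
Proof. by rewrite oppr_max addr_minr subr0; congr Num.min; lra. Qed.

Lemma max_pos_parts u q :
  Num.max (Num.max (u - q) 0) (Num.max (1 - u - (1 - q)) 0) = `|u - q|.
Proof.
have -> : 1 - u - (1 - q) = - (u - q) by lra.
by rewrite maxACA maxxx maxrN max_l.
Qed.

Lemma dist_min_le a b c d :
  `|Num.min a b - Num.min c d| <= Num.max `|a - c| `|b - d|.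
Proof.
have half a' b' c' d' :
    Num.min a' b' - Num.min c' d' <= Num.max `|a' - c'| `|b' - d'|.
  have [cd|dc] := leP c' d'.
  - apply: (@le_trans _ _ (a' - c')); first by rewrite lerB // ge_min lexx.
    by apply: le_trans (ler_norm _) _; rewrite le_max lexx.
  - apply: (@le_trans _ _ (b' - d')); first by rewrite lerB // ge_min lexx orbT.
    by apply: le_trans (ler_norm _) _; rewrite le_max lexx orbT.
apply/ler_normlP; split; last exact: half.
by rewrite opprB (distrC a) (distrC b); exact: half.
Qed.

Lemma dist_max_le a b c d :
  `|Num.max a b - Num.max c d| <= Num.max `|a - c| `|b - d|.
Proof.
by have := dist_min_le (- a) (- b) (- c) (- d); rewrite -!oppr_max -!opprD !normrN.
Qed.

Lemma dist_trunc_le a b q : `|Num.max (a - q) 0 - Num.max (b - q) 0| <= `|a - b|.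
Proof.
apply: le_trans (dist_max_le _ _ _ _) _.
by rewrite subrr normr0 max_l // opprB addrA subrK.
Qed.

Lemma dist_le_shift a b c d : `|a - b| <= `|c - d| + `|a - c| + `|b - d|.
Proof.
have := ler_distD c a b; have := ler_distD d c b; rewrite (distrC d b); lra.
Qed.

End MinMaxDistances.

Section ArchimedeanGrid.
Variable R : archiRealFieldType.

Lemma exists_invS_lt (e : R) : 0 < e -> exists n : nat, n.+1%:R^-1 < e.
Proof.
move=> e0; exists (Num.bound e^-1).
rewrite invf_plt ?posrE ?ltr0n //.
apply: lt_le_trans (archi_boundP _) _; first by rewrite invr_ge0 ltW.
by rewrite ler_nat.
Qed.

Lemma round_to_grid (N : nat) (y : R) : (0 < N)%N -> 0 <= y <= 1 ->
  exists j : 'I_N.+1, `|y - j%:R / N%:R| <= N%:R^-1.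
Proof.
move=> N0 /andP[y0 y1].
have N0' : 0 < N%:R :> R by rewrite ltr0n.
have yN0 : 0 <= y * N%:R by rewrite mulr_ge0 // ltW.
have jN : (Num.truncn (y * N%:R) < N.+1)%N.
  rewrite truncn_lt_nat //; apply: le_lt_trans (_ : _ <= N%:R) _.
    by rewrite ler_piMl // ltW.
  by rewrite ltr_nat.
exists (Ordinal jN) => /=.
have /andP[lo hi] := truncn_itv yN0.
rewrite ger0_norm ?subr_ge0 ?ler_pdivrMr //.
by rewrite lerBlDl -[X in _ + X]mul1r -mulrDl natr1 ler_pdivlMr // ltW.
Qed.
End ArchimedeanGrid.

Section UniformContinuity.
Variables (R : realType) (X : Type).

(* Glues countably many counterexamples: on layer j of nat * X the n-th term
   switches from k j to k' j once n <= j, so it tends uniformly to k. *)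
Definition switch_at (k k' : nat -> X -> I01 R) (n : nat) (y : nat * X) : I01 R :=
  if (n <= y.1)%N then k' y.1 y.2 else k y.1 y.2.

Lemma unif_cvg_switch_at (k k' : nat -> X -> I01 R) :
    (forall n a, `|v01 (k n a) - v01 (k' n a)| < n.+1%:R^-1) ->
  unif_cvg (fun n y => v01 (switch_at k k' n y)) (fun y => v01 (k y.1 y.2)).
Proof.
move=> kk' e e0; have [N ltNe] := exists_invS_lt e0.
exists N => n Nn [j a]; rewrite /switch_at /=.
case: ifP => nj; last by rewrite subrr normr0.
rewrite distrC; apply: lt_trans (kk' j a) (le_lt_trans _ ltNe).
by rewrite lef_pV2 ?posrE ?ltr0n // ler_nat ltnS (leq_trans Nn).
Qed.

Variables (B : functor) (Lambda : Type) (tau : Lambda -> B (I01 R) -> I01 R).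
Hypothesis Htau : tau_unif_continuous tau.

Lemma tau_uniformly_continuous (lam : Lambda) (e : R) : 0 < e ->
  exists2 d : R, 0 < d & forall k k' : X -> I01 R,
    (forall a, `|v01 (k a) - v01 (k' a)| < d) ->
    forall u, `|v01 (tau lam (Fmap k u)) - v01 (tau lam (Fmap k' u))| < e.
Proof.
move=> e0; apply: contrapT => noUC.
have bad n : exists p : (X -> I01 R) * (X -> I01 R) * B X,
    (forall a, `|v01 (p.1.1 a) - v01 (p.1.2 a)| < n.+1%:R^-1) /\
    e <= `|v01 (tau lam (Fmap p.1.1 p.2)) - v01 (tau lam (Fmap p.1.2 p.2))|.
  apply: contrapT => nobad; apply: noUC; exists n.+1%:R^-1; first by rewrite invr_gt0 ltr0n.
  move=> k k' kk' u; rewrite ltNge; apply/negP => le_e; apply: nobad.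
  by exists (k, k', u).
have [p pP] := choice bad.
pose k n := (p n).1.1; pose k' n := (p n).1.2.
have cvg := unif_cvg_switch_at (fun n a => (pP n).1 a) : unif_cvg _ (fun y => v01 (k y.1 y.2)).
have [N HN] := Htau cvg lam e0.
(* Pulling back along a |-> (N, a) reads off layer N of the glued sequence. *)
have := HN N (leqnn N) (Fmap (pair N) (p N).2); rewrite -!Fmap_comp.
have -> : (fun a => switch_at k k' N (N, a)) = k' N.
  by apply: funext => a; rewrite /switch_at leqnn.
by rewrite distrC ltNge (pP N).2.
Qed.

End UniformContinuity.

Section LatticeApproximation.
Variables (R : archiRealFieldType) (X : Type) (T : finType).

Definition fam_dist (G : T -> X -> R) (a b : X) : R :=
  \big[Num.max/0]_t `|G t a - G t b|.

Variables (G : T -> X -> R) (N : nat).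
Hypothesis N_gt0 : (0 < N)%N.
Hypothesis G01 : forall t a, 0 <= G t a <= 1.

Definition grid_dist (p : {ffun T -> 'I_N.+1}) (a : X) : R :=
  \big[Num.max/0]_t `|G t a - (p t)%:R / N%:R|.

Definition grid_approx (c : {ffun {ffun T -> 'I_N.+1} -> 'I_N.+1}) (a : X) : R :=
  \big[Num.min/1]_p Num.min (grid_dist p a + (c p)%:R / N%:R) 1.

Lemma grid_dist_ge0 p a : 0 <= grid_dist p a.
Proof. exact: bigmax_ge_id. Qed.

Lemma fam_dist_le_grid_dist p a b : fam_dist G a b <= grid_dist p a + grid_dist p b.
Proof.
apply: bigmax_le => [|t _]; first by rewrite addr_ge0 ?grid_dist_ge0.
apply: le_trans (ler_distD ((p t)%:R / N%:R) _ _) _.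
by rewrite (distrC _ (G t b)) lerD // /grid_dist le_bigmax.
Qed.

Lemma exists_grid_near a : exists p, grid_dist p a <= N%:R^-1.
Proof.
have /fin_all_exists [p pP] t := round_to_grid N_gt0 (G01 t a).
exists (finfun p); apply: bigmax_le => [|t _]; last by rewrite ffunE.
by rewrite invr_ge0 ler0n.
Qed.

Variables (h : X -> R) (e : R).
Hypothesis h01 : forall a, 0 <= h a <= 1.
Hypothesis e_ge0 : 0 <= e.
Hypothesis h_dominated : forall a b, h a - h b <= fam_dist G a b + e.

Lemma grid_cone_level p : exists j : 'I_N.+1,
  (forall a, h a <= j%:R / N%:R + grid_dist p a + e) /\
  (forall a, grid_dist p a <= N%:R^-1 -> j%:R / N%:R <= h a + 2%:R * N%:R^-1).
Proof.
have N_inv_ge0 : 0 <= N%:R^-1 :> R by rewrite invr_ge0 ler0n.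
(* The least level satisfying the first clause; its minimality gives the second. *)
pose P j := `[< forall a, h a <= j%:R / N%:R + grid_dist p a + e >].
have PN : P N.
  apply/asboolP => a; rewrite divff ?pnatr_eq0 -?lt0n //.
  by have := h01 a; have := grid_dist_ge0 p a; move: e_ge0; lra.
have [j /asboolP Pj minj] := ex_minnP (ex_intro P N PN).
have jN : (j < N.+1)%N by rewrite ltnS minj.
exists (Ordinal jN); split => //= a0 near_a0.
case: j minj Pj {jN} => [|j] minj _; first by rewrite mul0r; have := h01 a0; lra.
have /asboolP/existsNP[a] : ~~ P j by apply/negP => /minj; rewrite ltnn.
move/negP; rewrite -ltNge => lt_j.
have := h_dominated a a0; have := fam_dist_le_grid_dist p a a0.
rewrite -natr1 mulrDl mul1r; lra.
Qed.

Lemma grid_approx_close :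
  exists c, forall a, `|grid_approx c a - h a| <= e + 3%:R * N%:R^-1.
Proof.
have N_inv_ge0 : 0 <= N%:R^-1 :> R by rewrite invr_ge0 ler0n.
have /fin_all_exists [c cP] := grid_cone_level.
exists (finfun c) => a; rewrite ler_distl /grid_approx; apply/andP; split.
  apply: le_bigmin => [|p _]; first by have := h01 a; move: e_ge0; lra.
  rewrite le_min ffunE; have := (cP p).1 a; have := h01 a; move: e_ge0 => *.
  by apply/andP; split; lra.
have [p near_p] := exists_grid_near a.
apply: (bigmin_inf p) => //; rewrite ge_min ffunE; apply/orP; left.
by have := (cP p).2 a near_p; move: e_ge0 near_p; lra.
Qed.

End LatticeApproximation.

Section Logic.
Variables (R : realType) (B : functor) (Lambda : Type).
Variables (tau : Lambda -> B (I01 R) -> I01 R) (X : Type) (x : X -> B X).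

Definition semR (phi : formula Lambda) (a : X) : R := v01 (sem tau x phi a).

Lemma semR01 phi a : 0 <= semR phi a <= 1.
Proof. by rewrite /semR; case: (sem tau x phi a). Qed.

Definition FBot : formula Lambda := FNeg FTop.
Definition FMax (phi psi : formula Lambda) := FNeg (FMin (FNeg phi) (FNeg psi)).

Lemma compQ_subproof (q : Q01) : (0 <= 1 - sval q <= 1)%R.
Proof. by case: q => q /= /andP[q0 q1]; apply/andP; split; lra. Qed.
Definition compQ (q : Q01) : Q01 :=
  exist (fun r : rat => (0 <= r <= 1)%R) (1 - sval q) (compQ_subproof q).

Definition FDist (phi : formula Lambda) q := FMax (FMinus q phi) (FMinus (compQ q) (FNeg phi)).
Definition FAddC (phi : formula Lambda) q := FNeg (FMinus q (FNeg phi)).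

Lemma gridQ_subproof (N : nat) (j : 'I_N.+1) : (0 <= (j%:R / N%:R : rat) <= 1)%R.
Proof.
apply/andP; split; first by rewrite divr_ge0.
case: N j => [|N] j; first by rewrite invr0 mulr0.
by rewrite ler_pdivrMr ?ltr0n // mul1r ler_nat -ltnS.
Qed.
Definition gridQ N (j : 'I_N.+1) : Q01 :=
  exist (fun q : rat => (0 <= q <= 1)%R) _ (gridQ_subproof j).

Lemma ratr_gridQ N (j : 'I_N.+1) : ratr (sval (gridQ j)) = j%:R / N%:R :> R.
Proof. by rewrite /= fmorph_div !rmorph_nat. Qed.

Lemma semR_max phi psi a : semR (FMax phi psi) a = Num.max (semR phi a) (semR psi a).
Proof. by rewrite /semR /= oneB_minB. Qed.

Lemma semR_dist phi q a : semR (FDist phi q) a = `|semR phi a - ratr (sval q)|.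
Proof. by rewrite semR_max /semR /= rmorphB rmorph1 max_pos_parts. Qed.

Lemma semR_addc phi q a : semR (FAddC phi q) a = Num.min (semR phi a + ratr (sval q)) 1.
Proof. by rewrite /semR /= oneB_max_oneB. Qed.

Lemma semR_bigmax (T : finType) (F : T -> formula Lambda) a :
  semR (\big[FMax/FBot]_t F t) a = \big[Num.max/0]_t semR (F t) a.
Proof.
apply: (big_morph (semR^~ a)) => [phi psi|]; first exact: semR_max.
by rewrite /semR /= subrr.
Qed.

Lemma semR_bigmin (T : finType) (F : T -> formula Lambda) a :
  semR (\big[@FMin _/FTop]_t F t) a = \big[Num.min/1]_t semR (F t) a.
Proof. exact: (big_morph (semR^~ a)). Qed.

Lemma depth_bigop (T : finType) (op : formula Lambda -> formula Lambda -> formula Lambda)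
    idx (F : T -> formula Lambda) i :
  (forall phi psi, depth (op phi psi) = maxn (depth phi) (depth psi)) ->
  (depth idx <= i)%N -> (forall t, depth (F t) <= i)%N -> (depth (\big[op/idx]_t F t) <= i)%N.
Proof.
move=> depth_op idx_i F_i; elim/big_ind: _ => // phi psi phi_i psi_i.
by rewrite depth_op geq_max phi_i.
Qed.

Section GridFormula.
Variables (T : finType) (g : T -> formula Lambda) (N : nat).

Definition grid_dist_formula (p : {ffun T -> 'I_N.+1}) : formula Lambda :=
  \big[FMax/FBot]_t FDist (g t) (gridQ (p t)).

Definition grid_formula (c : {ffun {ffun T -> 'I_N.+1} -> 'I_N.+1}) : formula Lambda :=
  \big[@FMin _/FTop]_p FAddC (grid_dist_formula p) (gridQ (c p)).

Lemma semR_grid_formula c a :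
  semR (grid_formula c) a = grid_approx (fun t => semR (g t)) c a.
Proof.
rewrite semR_bigmin; apply: eq_bigr => p _; rewrite semR_addc ratr_gridQ.
rewrite semR_bigmax; congr (Num.min (_ + _) _).
by apply: eq_bigr => t _; rewrite semR_dist ratr_gridQ.
Qed.

Lemma depth_grid_formula c i :
  (forall t, depth (g t) <= i)%N -> (depth (grid_formula c) <= i)%N.
Proof.
move=> g_i; apply: depth_bigop => // p.
by apply: depth_bigop => // t; rewrite /= !maxnn g_i.
Qed.

End GridFormula.

End Logic.

Local Open Scope classical_set_scope.

Section Pseudometric.
Variables (R : realType) (X : Type) (S : set (X -> I01 R)).

Lemma dist01_le1 (u v : I01 R) : `|v01 u - v01 v| <= 1.
Proof.
case: u v => [u /andP[u0 u1]] [v /andP[v0 v1]] /=.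
by rewrite ler_norml; apply/andP; split; lra.
Qed.

Lemma dist01_le_sup (T : Type) (A : set T) (f g : T -> I01 R) t : A t ->
  `|v01 (f t) - v01 (g t)| <= sup [set `|v01 (f s) - v01 (g s)| | s in A].
Proof.
move=> At; apply: ub_le_sup; last by exists t.
by exists 1 => _ [s _ <-]; exact: dist01_le1.
Qed.

Lemma nonexpansive_mem k : S k -> nonexpansive S k.
Proof. by move=> Sk a b; exact: (dist01_le_sup (fun k => k a) (fun k => k b) Sk). Qed.

Lemma dS_le a b m : S !=set0 -> (forall k, S k -> `|v01 (k a) - v01 (k b)| <= m) ->
  dS S a b <= m.
Proof.
move=> [k Sk] le_m; apply: ge_sup; first by exists `|v01 (k a) - v01 (k b)|, k.
by move=> _ [k' S'k' <-]; exact: le_m.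
Qed.

End Pseudometric.

Section DepthApproximation.
Variables (R : realType) (B : functor) (Lambda : finType).
Variable tau : Lambda -> B (I01 R) -> I01 R.
Hypothesis Htau : tau_unif_continuous tau.
Variables (X : Type) (x : X -> B X).

Local Notation semR := (semR tau x).
Local Notation S_depth := (S_depth tau x).

Definition finitely_dominated (i : nat) := forall e : R, 0 < e ->
  exists (T : finType) (g : T -> formula Lambda), (forall t, depth (g t) <= i)%N /\
  forall psi, (depth psi <= i)%N ->
    forall a b, `|semR psi a - semR psi b| <= fam_dist (fun t => semR (g t)) a b + e.

Lemma sem_depth_mem (phi : formula Lambda) i : (depth phi <= i)%N -> S_depth i (sem tau x phi).
Proof. by exists phi. Qed.

Lemma depth_net i : finitely_dominated i -> forall d : R, 0 < d ->
  exists (T : finType) (f : T -> formula Lambda), (forall t, depth (f t) <= i)%N /\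
  forall h : X -> I01 R, nonexpansive (S_depth i) h ->
    exists t, forall a, `|v01 (h a) - semR (f t) a| < d.
Proof.
move=> dom_i d d0.
have [T [g [g_i g_dom]]] := dom_i (d / 4%:R) (divr_gt0 d0 (ltr0n R 4)).
have [N invN_lt] := exists_invS_lt (divr_gt0 d0 (ltr0n R 8)).
exists {ffun {ffun T -> 'I_N.+2} -> 'I_N.+2}, (grid_formula g (N := N.+1)).
split=> [c|h h_ne]; first exact: depth_grid_formula.
have h01 a : 0 <= v01 (h a) <= 1 by case: (h a).
have h_dom a b : v01 (h a) - v01 (h b) <= fam_dist (fun t => semR (g t)) a b + d / 4%:R.
  apply: le_trans (ler_norm _) (le_trans (h_ne a b) _).
  apply: dS_le => [|_ [phi [phi_i ->]]]; first by exists (sem tau x FTop), FTop.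
  exact: g_dom.
have [c close] := grid_approx_close (ltn0Sn N) (fun t => semR01 tau x (g t)) h01
  (ltW (divr_gt0 d0 (ltr0n R 4))) h_dom.
exists c => a; rewrite distrC semR_grid_formula.
apply: le_lt_trans (close a) _; move: invN_lt d0; set w := N.+1%:R^-1; lra.
Qed.

Lemma sem_dist_le_modal n a b (m : R) : 0 <= m ->
  (forall lam psi, (depth psi < n)%N ->
     `|semR (FHeart lam psi) a - semR (FHeart lam psi) b| <= m) ->
  forall psi, (depth psi <= n)%N -> `|semR psi a - semR psi b| <= m.
Proof.
move=> m0 modal_le; elim=> [|p IHp|p IHp q IHq|r p IHp|lam p _] /= p_n.
- by rewrite /semR /= subrr normr0.
- by rewrite /semR /= opprB addrC -addrA addKr distrC IHp.
- move: p_n; rewrite geq_max => /andP[p_n q_n].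
  by apply: le_trans (dist_min_le _ _ _ _) _; rewrite ge_max IHp ?IHq.
- exact: le_trans (dist_trunc_le _ _ _) (IHp p_n).
- exact: modal_le.
Qed.

Lemma finitely_dominated0 : finitely_dominated 0.
Proof.
move=> e e0; exists 'I_0, (fun _ => FTop); split=> // psi psi_0 a b.
by apply: sem_dist_le_modal psi_0; rewrite ?addr_ge0 ?bigmax_ge_id ?ltW.
Qed.

Lemma finitely_dominatedS i : finitely_dominated i -> finitely_dominated i.+1.
Proof.
move=> dom_i e e0; have e2 : 0 < e / 2%:R by rewrite divr_gt0 ?ltr0n.
have /fin_all_exists2 [del del0 del_UC] := fun lam => tau_uniformly_continuous X Htau lam e2.
pose d := \big[Num.min/1]_lam del lam.
have d0 : 0 < d by elim/big_ind: d => // u v u0 v0; rewrite lt_min u0.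
have [T [f [f_i f_net]]] := depth_net dom_i d0.
exists (Lambda * T)%type, (fun p => FHeart p.1 (f p.2)); split=> [[lam t]|psi psi_i a b].
  by rewrite /= ltnS.
apply: sem_dist_le_modal psi_i; first by rewrite addr_ge0 ?bigmax_ge_id ?ltW.
move=> lam p; rewrite ltnS => p_i.
have [t close] := f_net _ (nonexpansive_mem (sem_depth_mem p_i)).
have UC := del_UC lam _ _ (fun a => lt_le_trans (close a) (bigmin_le _ lam _)).
pose heart p := semR (FHeart p.1 (f p.2)).
apply: le_trans (dist_le_shift _ _ (heart (lam, t) a) (heart (lam, t) b)) _.
have := le_bigmax 0 (fun p => `|heart p a - heart p b|) (lam, t).
have := UC (x a); have := UC (x b); rewrite /fam_dist /heart /semR /=; lra.
Qed.

Lemma finitely_dominated_all i : finitely_dominated i.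
Proof. by elim: i => [|i]; [exact: finitely_dominated0 | exact: finitely_dominatedS]. Qed.

End DepthApproximation.

Theorem propositionV8 (R : realType) (B : functor) (Lambda : finType)
    (tau : Lambda -> B (I01 R) -> I01 R)
    (Htau : tau_unif_continuous tau)
    (X : Type) (x : X -> B X) :
  forall i : nat, approximating tau (S_depth tau x i).
Proof.
move=> i h h_ne lam z w; apply/ler_addgt0Pr => e e0.
have [d d0 UC] := tau_uniformly_continuous X Htau lam (divr_gt0 e0 (ltr0n R 2)).
have [T [f [f_i f_net]]] := depth_net (finitely_dominated_all Htau x i) d0.
have [t close] := f_net h h_ne.
pose k := sem tau x (f t).
have k_sup := dist01_le_sup (fun p => tau p.2 (Fmap p.1 z)) (fun p => tau p.2 (Fmap p.1 w))
  (sem_depth_mem tau x (f_i t) : [set p | S_depth tau x i p.1] (k, lam)).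
apply: le_trans (dist_le_shift _ _ (v01 (tau lam (Fmap k z))) (v01 (tau lam (Fmap k w)))) _.
by have := UC _ _ close z; have := UC _ _ close w; move: k_sup => /=; lra.
Qed.
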